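(* Let $p$ be prime and $H\le\mathrm{S}_n$ be in $\mathfrak{InP}(\mathrm{C}_p)$ with $|H|=p^s$, and let $B,K,\gamma,D$ be as in the context. Let $F=\mathrm{GL}_s(p)\times D$ act on the set $\mathrm{M}(s,k,p)$ of $s\times k$ matrices over $\mathbb{F}_p$ by $M^{(R,d)}=R^{-1}Md$. Let $\kappa\in K$ and let $M,M'\in\mathrm{M}(s,k,p)$ be generator matrices of $\gamma(H)$ and $\gamma(H^{\kappa^{-1}})$ respectively. Then there exists $b\in B$ with $b\kappa\in N_{\mathrm{S}_n}(H)$ if and only if there exists $f\in F$ with $M^f=M'$.
   Context: $H\le\mathrm{S}_{n}$, $n=pk$, has orbits $\Omega_1,\dots,\Omega_k$ of size $p$ with each $G_i:=H|_{\Omega_i}$ cyclic of order $p$ (regarded as a subgroup of $\mathrm{S}_n$); $G=G_1\times\dots\times G_k$; $x^g=g^{-1}xg$, so $H^{\kappa^{-1}}=\kappa H\kappa^{-1}$. For a bijection $\varphi:\Omega_1\to\Omega_j$ ($j\neq1$), $\overline\varphi$ is the involution in $\mathrm{Sym}(\Omega_1\cup\Omega_j)$ with $\alpha^{\overline\varphi}=\varphi(\alpha)$ for $\alpha\in\Omega_1$. For $2\le j\le k$, $\phi_j:\Omega_1\to\Omega_j$ witnesses a permutation isomorphism from $G_1$ to $G_j$. $B=\langle N_{\mathrm{Sym}(\Omega_i)}(G_i):1\le i\le k\rangle$, $K=\langle\overline{\phi_j}:2\le j\le k\rangle$. $g_1$ generates $G_1$, $g_j=g_1^{\overline{\phi_j}}$,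 and $\gamma:G\to\mathbb{F}_p^k$ is $\gamma(g_1^{r_1}\cdots g_k^{r_k})=(r_1,\dots,r_k)$. $D$ is the group of diagonal matrices in $\mathrm{GL}_k(p)$. A generator matrix of a code is a matrix whose rows form a basis of it. *)

From mathcomp Require Import all_boot all_order all_algebra all_fingroup all_solvable.
Set Implicit Arguments. Unset Strict Implicit. Unset Printing Implicit Defensive.
Import GRing.Theory.
Local Open Scope ring_scope.

(* G_i := H|_{Omega_i}, regarded as a subgroup of S_n (identity off Omega_i). *)
Definition restrG n (Om : {set 'I_n}) (H : {group {perm 'I_n}}) : {group {perm 'I_n}} :=
  (restr_perm Om @* H)%G.

Definition is_bar n (A B : {set 'I_n}) (phi : 'I_n -> 'I_n) (t : {perm 'I_n}) : Prop :=
  (forall a, a \in A -> t a = phi a /\ t (phi a) = a) /\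
  (forall x, x \notin A :|: B -> t x = x).

Definition gen_i n k (i1 : 'I_k) (g1 : {perm 'I_n}) (t : 'I_k -> {perm 'I_n}) (i : 'I_k)
  : {perm 'I_n} := if i == i1 then g1 else (g1 ^ t i)%g.

Definition expo n (g x : {perm 'I_n}) : nat :=
  find (fun r => x == (g ^+ r)%g) (iota 0 #[g]%g).

(* gamma(g_1^{r_1} ... g_k^{r_k}) = (r_1,...,r_k) *)
Definition gamma (p n k : nat) (Om : 'I_k -> {set 'I_n}) (gg : 'I_k -> {perm 'I_n})
  (x : {perm 'I_n}) : 'rV['F_p]_k :=
  \row_i ((expo (gg i) (restr_perm (Om i) x))%:R : 'F_p)%R.

Definition generator_matrix p s k (M : 'M['F_p]_(s, k)) (S : {set 'rV['F_p]_k}) : Prop :=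
  row_free M /\ forall v : 'rV['F_p]_k, (v <= M)%MS <-> v \in S.

Definition F_related p s k (M M' : 'M['F_p]_(s, k)) : Prop :=
  exists R : 'M['F_p]_s, exists d : 'M['F_p]_k,
    [/\ R \in unitmx, is_diag_mx d, d \in unitmx & invmx R *m M *m d = M'].

From mathcomp Require Import all_boot all_order all_algebra all_fingroup all_solvable.
Set Implicit Arguments. Unset Strict Implicit. Unset Printing Implicit Defensive.
Import GRing.Theory.

(* Conjugation by an element b of B normalises every G_i = <[g_i]>, hence raises
   each g_i to a power a_i prime to p; in the coordinates gamma on
   G = G_1 x ... x G_k it therefore acts as right multiplication by the invertible
   diagonal matrix diag(a_i).  Conversely every invertible diagonal matrix arises
   in this way, because G_i acts regularly on Omega_i, so any power automorphism
   of G_i is induced by a permutation of Omega_i.  As gamma is injective on G and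
   K normalises G, b * kappa normalises H iff gamma(H^b) = gamma(H^(kappa^-1)),
   i.e. iff the row spaces of M diag(a_i) and M' agree; for row-free M and M'
   this means M' = R^-1 M diag(a_i) with R invertible. *)

Section PermFacts.
Local Open Scope group_scope.
Variable T : finType.
Implicit Types (A C O : {set T}) (c g x : {perm T}).

Lemma astabs_perm_im A c : c \in 'N(A | 'P) -> c @: A = A.
Proof. by move/astabs_setact; rewrite setactE. Qed.

Lemma Sym_astabs A : perm.Sym A \subset 'N(A | 'P).
Proof. by rewrite SymE -astabsC astab_sub. Qed.

Lemma Sym_astabs_disjoint A C : [disjoint A & C] -> perm.Sym A \subset 'N(C | 'P).
Proof.
move=> dAC; rewrite SymE; apply: subset_trans (astab_sub _ _).
by apply: astabS; rewrite -disjoints_subset disjoint_sym.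
Qed.

Lemma Sym_disjoint_cent A C : [disjoint A & C] -> perm.Sym A \subset 'C(perm.Sym C).
Proof.
move=> dAC; apply/centsP => c; rewrite inE => cA z; rewrite inE => zC.
exact: perm_onC cA zC dAC.
Qed.

Lemma restr_permJ A x c : x \in 'N(A | 'P) ->
  x ^ c \in 'N(c @: A | 'P) /\ restr_perm (c @: A) (x ^ c) = restr_perm A x ^ c.
Proof.
move=> xA; have memJ y : (c y \in c @: A) = (y \in A).
  by rewrite mem_imset //; apply: perm_inj.
have xcA : x ^ c \in 'N(c @: A | 'P).
  apply/astabsP => y; rewrite /= apermE -[y](permKV c) permJ !memJ.
  exact: (astabsP xA).
split=> //; apply/permP => y; rewrite -[y](permKV c) permJ.
have [yA | yA] := boolP (c^-1 y \in A).
  by rewrite !restr_permE ?memJ // permJ.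
by rewrite !(out_perm (restr_perm_on _ _)) ?memJ.
Qed.

Lemma regular_orbit_inj (A : {group {perm T}}) y :
  #|orbit 'P A y| = #|A| -> {in A &, injective (fun x => x y)}.
Proof. by move/eqP/imset_injP. Qed.

Lemma regular_cycle_powerJ O g y0 a :
    perm_on O g -> orbit 'P <[g]> y0 = O -> #|O| = #[g] -> coprime #[g] a ->
  exists2 c, perm_on O c & g ^ c = g ^+ a.
Proof.
move=> gO orbO cardO coa.
have inj : {in <[g]> &, injective (fun x => x y0)}.
  by apply: regular_orbit_inj; rewrite orbO cardO.
have orbE z : z \in O -> exists2 x, x \in <[g]> & z = x y0.
  by rewrite -orbO => /orbitP [x xg <-]; exists x.
(* c maps x y0 to (x ^+ a) y0 for x in <[g]>; regularity makes x unique. *)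
pose rep z := odflt 1 [pick x in <[g]> | x y0 == z].
have repE x : x \in <[g]> -> rep (x y0) = x.
  move=> xg; rewrite /rep; case: pickP => [x' /andP [x'g /eqP] | /(_ x)].
    exact: inj.
  by rewrite xg eqxx.
pose f m z := if z \in O then (rep z ^+ m) y0 else z.
have fE m x : x \in <[g]> -> f m (x y0) = (x ^+ m) y0.
  by move=> xg; rewrite /f -orbO (mem_orbit 'P y0 xg) repE.
have fK : cancel (f a) (f (expg_invn <[g]> a)).
  move=> z; have [zO | zO] := boolP (z \in O); last by rewrite /f (negPf zO) (negPf zO).
  by have [x xg ->] := orbE z zO; rewrite !fE ?groupX // expgK.
pose c := perm (can_inj fK).
have cO : perm_on O c.
  by apply/subsetP => z; rewrite inE permE /f; case: ifP => // _; rewrite eqxx.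
have gaO : perm_on O (g ^+ a).
  have : g ^+ a \in perm.Sym O by rewrite groupX ?inE.
  by rewrite inE.
exists c => //; apply/permP => z; rewrite -[z](permKV c) permJ.
have [wO | wO] := boolP (c^-1 z \in O); last first.
  by rewrite (out_perm gO wO) (out_perm cO wO) (out_perm gaO wO).
have [_ /cycleP [m ->] ->] := orbE _ wO.
rewrite -[g _]permM -expgSr !permE !fE ?mem_cycle // -permM.
by rewrite -!expgM -expgD mulSn addnC.
Qed.

Lemma conjg_prod_perm_on (I : eqType) (r : seq I) (O : I -> {set T})
    (c : I -> {perm T}) j (z : {perm T}) :
    uniq r -> (forall i, perm_on (O i) (c i)) ->
    (forall i, i != j -> [disjoint O j & O i]) -> perm_on (O j) z ->
  z ^ (\prod_(i <- r) c i) = if j \in r then z ^ c j else z.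
Proof.
move=> + cO dO; elim: r z => [|i r IH] z /=; first by rewrite big_nil conjg1.
case/andP => ir ur zO; rewrite big_cons conjgM inE.
have [eji | ji] /= := eqVneq j i.
  subst i; rewrite IH ?(negPf ir) //.
  have : z ^ c j \in perm.Sym (O j) by rewrite groupJ ?inE.
  by rewrite inE.
have ij : i != j by rewrite eq_sym.
have /commgP/conjg_fixP -> := perm_onC zO (cO i) (dO i ij).
by rewrite IH.
Qed.

End PermFacts.

Lemma imset_inj_in (aT rT : finType) (f : aT -> rT) (D A B : {set aT}) :
  {in D &, injective f} -> A \subset D -> B \subset D -> f @: A = f @: B -> A = B.
Proof.
move=> fD; suff sub (X Y : {set aT}) :
    X \subset D -> Y \subset D -> f @: X = f @: Y -> X \subset Y.
  by move=> AD BD fAB; apply/eqP; rewrite eqEsubset sub // sub.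
move=> /subsetP XD /subsetP YD fXY; apply/subsetP => x xX.
have /imsetP [y yY fxy] : f x \in f @: Y by rewrite -fXY imset_f.
by rewrite (fD x y (XD x xX) (YD y yY) fxy).
Qed.

Section Expo.
Local Open Scope group_scope.
Variable n : nat.
Implicit Types g y : {perm 'I_n}.

Lemma expo_expg g m : expo g (g ^+ m) = m %% #[g].
Proof.
rewrite /expo (@eq_in_find _ _ (pred1 (m %% #[g]))); last first.
  move=> r; rewrite mem_iota add0n /= => rlt.
  by rewrite eq_expg_mod_order (modn_small rlt) eq_sym.
rewrite (_ : find _ _ = index (m %% #[g]) (iota 0 #[g])) //.
have mlt : m %% #[g] < #[g] by rewrite ltn_pmod ?order_gt0.
rewrite -{1}(add0n (m %% #[g])) -(nth_iota 0 0 mlt).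
by rewrite index_uniq ?size_iota ?iota_uniq.
Qed.

Lemma expg_expo g y : y \in <[g]> -> g ^+ expo g y = y.
Proof. by case/cycleP => m ->; rewrite expo_expg expg_mod_order. Qed.

End Expo.

Lemma unitmx_diagP (F : fieldType) m (e : 'rV[F]_m) :
  reflect (forall i, e ord0 i != 0%R) (diag_mx e \in unitmx).
Proof.
rewrite unitmxE det_diag unitfE.
by apply: (iffP (prodf_neq0 _ _)) => [eP i | eP i _]; apply: eP.
Qed.

Lemma is_bar_involution n (A B : {set 'I_n}) phi (t : {perm 'I_n}) :
  phi @: A = B -> is_bar A B phi t -> [/\ (t * t = 1)%g, perm_on (A :|: B) t & t @: A = B].
Proof.
move=> phiA [tA tout].
have Bphi y : y \in B -> exists2 a, a \in A & y = phi a by rewrite -phiA => /imsetP.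
split.
- apply/permP => y; rewrite permM perm1.
  have [yA | nyA] := boolP (y \in A); first by rewrite (tA y yA).1 (tA y yA).2.
  have [yB | nyB] := boolP (y \in B).
    by have [a aA ->] := Bphi y yB; rewrite (tA a aA).2 (tA a aA).1.
  by rewrite !tout // inE negb_or nyA nyB.
- by apply/subsetP => y; apply: contraR => /tout yE; rewrite /= yE eqxx.
- by rewrite -phiA; apply: eq_in_imset => a /tA [].
Qed.

Section GeneratorMatrix.
Local Open Scope ring_scope.
Variables p s k : nat.

Lemma F_relatedP (M M' : 'M['F_p]_(s, k)) : row_free M' ->
  F_related M M' <-> exists d, [/\ is_diag_mx d, d \in unitmx & (M *m d == M')%MS].
Proof.
move=> freeM'; split => [[R [d [Ru dd du E]]] | [d [dd du /andP [sMdM' sM'Md]]]].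
  have MdE : M *m d = R *m M' by rewrite -E -mulmxA mulKVmx.
  exists d; split=> //; apply/andP; split; first by rewrite MdE; apply: submxMl.
  by rewrite -E -mulmxA; apply: submxMl.
have [Y EY] := submxP sMdM'; have [X EX] := submxP sM'Md.
have XY : X *m Y = 1%:M.
  by apply: (row_free_inj freeM'); rewrite /= mul1mx -mulmxA -EY -EX.
have [Xu _] := mulmx1_unit XY.
by exists (invmx X), d; split; rewrite ?unitmx_inv // invmxK -mulmxA -EX.
Qed.

Lemma generator_matrix_mulmx (S S' : {set 'rV['F_p]_k}) (M M' : 'M['F_p]_(s, k)) d :
    generator_matrix M S -> generator_matrix M' S' ->
  (M *m d == M')%MS <-> [set v *m d | v in S] = S'.
Proof.
move=> [_ SM] [_ SM'].
have img v : (v <= M *m d)%MS = (v \in [set w *m d | w in S]).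
  apply/idP/imsetP => [/submxP [w ->] | [u /SM uM ->]]; last exact: submxMr.
  by exists (w *m M); [apply/SM; exact: submxMl | rewrite mulmxA].
split => [/eqmxP eqM | S'E].
  by apply/setP => v; rewrite -img eqM; apply/idP/idP => /SM'.
apply/andP; split; apply/rV_subP => v; first by rewrite img S'E => /SM'.
by move/SM'; rewrite -S'E -img.
Qed.

End GeneratorMatrix.

Section OrbitCoordinates.
Local Open Scope group_scope.

Variables (p k n : nat) (H : {group {perm 'I_n}}) (Om : 'I_k -> {set 'I_n}).
Variables (i1 : 'I_k) (phi : 'I_k -> 'I_n -> 'I_n) (t : 'I_k -> {perm 'I_n}).
Variable g1 : {perm 'I_n}.
Hypothesis Hp : prime p.
Hypothesis Hcover : forall x : 'I_n, exists i, x \in Om i.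
Hypothesis Hdisj : forall i j, i != j -> [disjoint Om i & Om j].
Hypothesis Horb : forall i x, x \in Om i -> orbit 'P%act H x = Om i.
Hypothesis Hsize : forall i, #|Om i| = p.
Hypothesis Hord : forall i, #|restrG (Om i) H| = p.
Hypothesis Hphi : forall j, j != i1 -> phi j @: Om i1 = Om j.
Hypothesis Hbar : forall j, j != i1 -> is_bar (Om i1) (Om j) (phi j) (t j).
Hypothesis Hiso : forall j, j != i1 -> restrG (Om i1) H :^ t j = restrG (Om j) H.
Hypothesis Hg1 : generator (restrG (Om i1) H) g1.

Local Notation G i := (restrG (Om i) H).
Local Notation gg := (gen_i i1 g1 t).
Local Notation gam := (gamma p Om gg).
Local Notation B := <<\bigcup_(i < k) 'N_(perm.Sym (Om i))(G i)>>.
Local Notation K := <<[set t j | j in [set j | j != i1]]>>.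

(* The paper's G = G_1 x ... x G_k: the permutations stabilising every orbit
   Om i and restricting into G_i there. *)
Definition Gprod := \bigcap_(i < k) restr_perm (Om i) @*^-1 G i.

Lemma restrG_sub_Sym i : G i \subset perm.Sym (Om i).
Proof. by apply/subsetP => _ /morphimP [x _ _ ->]; rewrite inE restr_perm_on. Qed.

Lemma restrG_cycle i : G i :=: <[gg i]>.
Proof.
rewrite /gen_i; case: eqP => [-> | /eqP ji]; first exact/eqP.
by rewrite cycleJ -(eqP Hg1) Hiso.
Qed.

Lemma order_gen i : #[gg i] = p.
Proof. by rewrite orderE -restrG_cycle Hord. Qed.

Lemma gen_perm_on i : perm_on (Om i) (gg i).
Proof.
have : gg i \in perm.Sym (Om i).
  by apply: (subsetP (restrG_sub_Sym i)); rewrite restrG_cycle cycle_id.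
by rewrite inE.
Qed.

Lemma expg_gen_Fp i m : gg i ^+ ((m%:R)%R : 'F_p) = gg i ^+ m.
Proof. by rewrite val_Fp_nat // -(order_gen i) expg_mod_order. Qed.

Lemma H_sub_astabs i : H \subset 'N(Om i | 'P).
Proof.
have /card_gt0P [y yOm] : 0 < #|Om i| by rewrite Hsize prime_gt0.
by rewrite -(Horb yOm); apply: acts_orbit; apply: subsetT.
Qed.

Lemma orbit_restrG i y : y \in Om i -> orbit 'P (G i) y = Om i.
Proof.
move=> yOm; apply/eqP; rewrite eqEsubset; apply/andP; split.
  apply/subsetP => _ /imsetP [x /(subsetP (restrG_sub_Sym i)) xOm ->].
  by rewrite inE in xOm; rewrite /= apermE (perm_closed _ xOm).
apply/subsetP => z; rewrite -{1}(Horb yOm) => /orbitP [h hH <-].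
have hN := subsetP (H_sub_astabs i) h hH.
by rewrite /= apermE -(restr_permE hN yOm) -apermE mem_orbit ?mem_morphim.
Qed.

Lemma GprodP x :
  reflect (forall i, x \in 'N(Om i | 'P) /\ restr_perm (Om i) x \in G i) (x \in Gprod).
Proof.
apply: (iffP bigcapP) => [xG i | xG i _].
  exact/morphpreP/xG.
by apply/morphpreP; apply: xG.
Qed.

Lemma H_sub_Gprod : H \subset Gprod.
Proof.
apply/subsetP => h hH; apply/GprodP => i.
have hN := subsetP (H_sub_astabs i) h hH.
by split=> //; apply: mem_morphim.
Qed.

Lemma gamma_entry x i m : restr_perm (Om i) x = gg i ^+ m -> gam x ord0 i = (m%:R)%R.
Proof. by move=> xE; rewrite /gamma mxE xE expo_expg order_gen Fp_nat_mod. Qed.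

Lemma restr_Gprod x i : x \in Gprod -> restr_perm (Om i) x = gg i ^+ gam x ord0 i.
Proof.
case/GprodP/(_ i) => _; rewrite restrG_cycle => /cycleP [m xE].
by rewrite (gamma_entry xE) expg_gen_Fp.
Qed.

Lemma gamma_inj : {in Gprod &, injective gam}.
Proof.
move=> x z xG zG gxz; apply/permP => y; have [i yOm] := Hcover y.
have /GprodP/(_ i) [xN _] := xG; have /GprodP/(_ i) [zN _] := zG.
by rewrite -(restr_permE xN yOm) -(restr_permE zN yOm) !restr_Gprod // gxz.
Qed.

Lemma gammaJ (c : {perm 'I_n}) (e : 'rV['F_p]_k) x :
    (forall i, c \in 'N(Om i | 'P)) -> (forall i, gg i ^ c = gg i ^+ e ord0 i) ->
    x \in Gprod ->
  gam (x ^ c) = (gam x *m diag_mx e)%R.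
Proof.
move=> cN ce xG; apply/matrixP => r i; rewrite ord1 mul_mx_diag [RHS]mxE.
have /GprodP/(_ i) [xN _] := xG.
have [_] := restr_permJ c xN; rewrite astabs_perm_im // => rJ.
have -> : gam (x ^ c) ord0 i = ((e ord0 i * gam x ord0 i)%N%:R)%R.
  by apply: gamma_entry; rewrite rJ (restr_Gprod _ xG) conjXg ce -expgM.
by rewrite natrM !natr_Zp mulrC.
Qed.

Lemma B_sub_astabs i : B \subset 'N(Om i | 'P).
Proof.
rewrite gen_subG; apply/bigcupsP => j _; apply: subset_trans (subsetIl _ _) _.
have [-> | ij] := eqVneq i j; first exact: Sym_astabs.
by apply: Sym_astabs_disjoint; rewrite disjoint_sym Hdisj.
Qed.

Lemma B_sub_norm i : B \subset 'N(G i).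
Proof.
rewrite gen_subG; apply/bigcupsP => j _.
have [-> | ij] := eqVneq i j; first exact: subsetIr.
apply: subset_trans (subsetIl _ _) (subset_trans _ (cent_sub _)).
apply: subset_trans (Sym_disjoint_cent _) (centS (restrG_sub_Sym i)).
by rewrite disjoint_sym Hdisj.
Qed.

Lemma block_perm_norm_Gprod (c : {perm 'I_n}) (s : {perm 'I_k}) :
    (forall i, c @: Om i = Om (s i)) -> (forall i, G i :^ c = G (s i)) ->
  c \in 'N(Gprod).
Proof.
move=> cOm cG; rewrite inE; apply/subsetP => _ /imsetP [x xG ->]; apply/GprodP => i.
have /GprodP/(_ (s^-1 i)) [xN xR] := xG.
have [] := restr_permJ c xN; rewrite cOm permKV => xcN ->; split=> //.
have GE : G i :=: G (s^-1 i) :^ c by rewrite cG permKV.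
by rewrite GE memJ_conjg.
Qed.

Lemma t_norm_Gprod j : j != i1 -> t j \in 'N(Gprod).
Proof.
move=> ji; have [tt tS tA] := is_bar_involution (Hphi ji) (Hbar ji).
have tB : t j @: Om j = Om i1.
  rewrite -tA -imset_comp -[RHS]imset_id; apply: eq_imset => y /=.
  by rewrite -permM tt perm1.
have tOther i : i != i1 -> i != j -> t j \in 'N(Om i | 'P) /\ t j \in 'C(G i).
  move=> ii1 ij; have dOm : [disjoint Om i1 :|: Om j & Om i].
    rewrite disjoints_subset subUset -!disjoints_subset.
    by rewrite !(disjoint_sym _ (Om i)) (Hdisj ii1) (Hdisj ij).
  have tSym : t j \in perm.Sym (Om i1 :|: Om j) by rewrite inE.
  split; first exact: subsetP (Sym_astabs_disjoint dOm) _ tSym.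
  exact: subsetP (subset_trans (Sym_disjoint_cent dOm) (centS (restrG_sub_Sym i))) _ tSym.
apply: (block_perm_norm_Gprod (s := tperm i1 j)) => i;
  case: tpermP => [-> | -> | /eqP ii1 /eqP ij].
- exact: tA.
- exact: tB.
- exact/astabs_perm_im/(tOther i ii1 ij).1.
- exact: Hiso.
- by rewrite -(Hiso ji) -conjsgM tt conjsg1.
- exact/normP/(subsetP (cent_sub _))/(tOther i ii1 ij).2.
Qed.

Lemma K_norm_Gprod : K \subset 'N(Gprod).
Proof.
rewrite gen_subG; apply/subsetP => _ /imsetP [j + ->].
by rewrite inE; apply: t_norm_Gprod.
Qed.

Lemma B_norm_Gprod : B \subset 'N(Gprod).
Proof.
apply/subsetP => b bB; apply: (block_perm_norm_Gprod (s := 1)) => i; rewrite perm1.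
  exact/astabs_perm_im/(subsetP (B_sub_astabs i)).
exact/normP/(subsetP (B_sub_norm i)).
Qed.

Lemma Sym_norm_power i a :
  coprime p a -> exists2 c, c \in 'N_(perm.Sym (Om i))(G i) & gg i ^ c = gg i ^+ a.
Proof.
move=> coa; have /card_gt0P [y yOm] : 0 < #|Om i| by rewrite Hsize prime_gt0.
have [c cOm cE] : exists2 c, perm_on (Om i) c & gg i ^ c = gg i ^+ a.
  apply: (regular_cycle_powerJ (y0 := y) (gen_perm_on i)).
  - by rewrite -restrG_cycle orbit_restrG.
  - by rewrite Hsize order_gen.
  - by rewrite order_gen.
exists c => //; rewrite !inE cOm /= restrG_cycle -cycleJ cE cycle_subG.
by rewrite groupX ?cycle_id.
Qed.

Lemma B_conj_gamma_diag b : b \in B ->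
  exists d, [/\ is_diag_mx d, d \in unitmx &
               {in Gprod, forall x, gam (x ^ b) = (gam x *m d)%R}].
Proof.
move=> bB; pose e := (\row_i ((expo (gg i) (gg i ^ b)%g)%:R : 'F_p))%R.
have eE i : gg i ^ b = gg i ^+ e ord0 i.
  rewrite mxE expg_gen_Fp expg_expo // -cycle_subG cycleJ -restrG_cycle.
  by rewrite (normP (subsetP (B_sub_norm i) b bB)) restrG_cycle.
exists (diag_mx e); split; first exact: diag_mx_is_diag.
  apply/unitmx_diagP => i; apply/eqP => e0.
  have /eqP := eE i; rewrite e0 /= expg0 conjg_eq1 => /eqP gg1.
  by have := prime_gt1 Hp; rewrite -(order_gen i) gg1 order1.
move=> x xG; apply: gammaJ xG => i; last exact: eE.
exact: subsetP (B_sub_astabs i) b bB.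
Qed.

Lemma diag_gamma_conj_B d : is_diag_mx d -> d \in unitmx ->
  exists2 b, b \in B & {in Gprod, forall x, gam (x ^ b) = (gam x *m d)%R}.
Proof.
case/diag_mxP => e -> /unitmx_diagP enz.
have cop i : coprime p (e ord0 i).
  by rewrite prime_coprime // (dvdn_pcharf (pchar_Fp Hp)) natr_Zp.
have [c cN cE] := fin_all_exists2 (fun i => Sym_norm_power i (cop i)).
have bB : \prod_(i < k) c i \in B.
  by apply: group_prod => i _; apply: mem_gen; apply/bigcupP; exists i.
exists (\prod_(i < k) c i) => // x xG; apply: gammaJ xG => i.
  exact: subsetP (B_sub_astabs i) _ bB.
have cOm j : perm_on (Om j) (c j) by have /setIP [] := cN j; rewrite inE.
rewrite (conjg_prod_perm_on (j := i) _ cOm) ?mem_index_enum ?index_enum_uniq //.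
- by move=> j ji; apply: Hdisj; rewrite eq_sym.
- exact: gen_perm_on.
Qed.

Lemma gamma_conj_image b (d : 'M['F_p]_k) :
    {in Gprod, forall x, gam (x ^ b) = (gam x *m d)%R} ->
  gam @: (H :^ b) = [set (v *m d)%R | v in gam @: H].
Proof.
move=> bd; rewrite /conjugate -!imset_comp; apply: eq_in_imset => h hH /=.
exact: bd (subsetP H_sub_Gprod h hH).
Qed.

Lemma coset_norm_gamma b kappa : b \in B -> kappa \in K ->
  (b * kappa \in 'N(H)) = (gam @: (H :^ b) == gam @: (H :^ kappa^-1)).
Proof.
move=> bB kK; have conjG c : c \in 'N(Gprod) -> H :^ c \subset Gprod.
  by move=> /normP <-; rewrite conjSg H_sub_Gprod.
apply/normP/eqP => [bkH | /(imset_inj_in gamma_inj) bkH].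
  by rewrite -{2}bkH conjsgM conjsgK.
rewrite conjsgM bkH ?conjsgKV //; apply: conjG.
  exact: subsetP B_norm_Gprod b bB.
by rewrite groupV; apply: subsetP K_norm_Gprod kappa kK.
Qed.

Lemma coset_norm_iff_gamma_diag kappa : kappa \in K ->
  (exists2 b, b \in B & b * kappa \in 'N(H)) <->
  exists d, [/\ is_diag_mx d, d \in unitmx &
                [set (v *m d)%R | v in gam @: H] = gam @: (H :^ kappa^-1)].
Proof.
move=> kK; split => [[b bB] | [d [dd du dE]]].
  rewrite coset_norm_gamma // => /eqP bkH.
  have [d [dd du bd]] := B_conj_gamma_diag bB.
  by exists d; split; rewrite // -(gamma_conj_image bd).
have [b bB bd] := diag_gamma_conj_B dd du.
by exists b; rewrite // coset_norm_gamma // (gamma_conj_image bd) dE.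
Qed.

End OrbitCoordinates.

Theorem lemma4p3 (p k n s : nat) (Hp : prime p) (Hn : n = (p * k)%N)
  (H : {group {perm 'I_n}}) (Om : 'I_k -> {set 'I_n})
  (Hcover : forall x : 'I_n, exists i, x \in Om i)
  (Hdisj : forall i j, i != j -> [disjoint Om i & Om j])
  (Horb : forall i x, x \in Om i -> orbit 'P%act H x = Om i)
  (Hsize : forall i, #|Om i| = p)
  (Hcyc : forall i, cyclic (restrG (Om i) H))
  (Hord : forall i, #|restrG (Om i) H| = p)
  (HH : #|H| = (p ^ s)%N)
  (i1 : 'I_k) (Hi1 : nat_of_ord i1 = 0%N)
  (phi : 'I_k -> 'I_n -> 'I_n) (t : 'I_k -> {perm 'I_n})
  (Hphi : forall j, j != i1 ->
     {in Om i1 &, injective (phi j)} /\ phi j @: Om i1 = Om j)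
  (Hbar : forall j, j != i1 -> is_bar (Om i1) (Om j) (phi j) (t j))
  (Hiso : forall j, j != i1 -> (restrG (Om i1) H :^ t j)%g = restrG (Om j) H)
  (g1 : {perm 'I_n}) (Hg1 : generator (restrG (Om i1) H) g1)
  (kappa : {perm 'I_n})
  (Hkappa : kappa \in <<[set t j | j in [set j | j != i1]]>>%g)
  (M M' : 'M['F_p]_(s, k))
  (HM : generator_matrix M (gamma p Om (gen_i i1 g1 t) @: H))
  (HM' : generator_matrix M' (gamma p Om (gen_i i1 g1 t) @: (H :^ kappa^-1)%g)) :
  (exists2 b, b \in <<\bigcup_(i < k) 'N_(perm.Sym (Om i))(restrG (Om i) H)>>%g
              & (b * kappa)%g \in 'N(H)%g)
  <-> F_related M M'.
Proof.
have [freeM' _] := HM'.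
have HphiOm j (ji : j != i1) := (Hphi j ji).2.
have core := coset_norm_iff_gamma_diag Hp Hcover Hdisj Horb Hsize Hord HphiOm Hbar Hiso
  Hg1 Hkappa.
split=> [/core | /(F_relatedP _ freeM')] [d [dd du dE]].
  apply/(F_relatedP _ freeM'); exists d; split=> //.
  exact/(generator_matrix_mulmx d HM HM').
by apply/core; exists d; split=> //; apply/(generator_matrix_mulmx d HM HM').
Qed.
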